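(* Let $m\geq 3$. Let $\pi\in S(\mathbb{Z}_m)$ and $\pi_x\in S(\mathbb{Z}_2)$ for each $x\in\mathbb{Z}_m$, and define $\sigma\in S(\mathbb{Z}_m\times\mathbb{Z}_2)$ by $\sigma(x,y)=(\pi(x),\pi_x(y))$. Let $c\in S(\mathbb{Z}_m\times\mathbb{Z}_2)$ be given by $c(x,y)=(x+1,y)$ if $x\neq m-1$ and $c(x,y)=(x+1,y+1)$ if $x=m-1$. Then there is an integer $k$ such that $\sigma c^k$ has at least $4$ cycles; equivalently, $\min_k t(\sigma c^k)\leq 2m-4$, where $t(\tau)=2m-\mathrm{cyc}(\tau)$.
   Context: $S(X)$ denotes the set of bijections of a finite set $X$; $\mathrm{cyc}(\tau)$ is the number of cycles (including fixed points) of $\tau$. Under the bijection $\mathbb{Z}_{2m}\to\mathbb{Z}_m\times\mathbb{Z}_2$, $r+mt\mapsto(r,t)$ ($0\le r<m$, $t\in\{0,1\}$), $c$ corresponds to $z\mapsto z+1$, so $\{\sigma c^k\}$ corresponds to the circular class $[\sigma]$ and the claim says $t([\sigma])\leq 2m-4$. *)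

From mathcomp Require Import all_boot all_fingroup all_algebra.
Set Implicit Arguments. Unset Strict Implicit. Unset Printing Implicit Defensive.

Definition cyc (T : finType) (s : {perm T}) : nat := #|porbits s|.

Definition perm_zpow (T : finType) (s : {perm T}) (k : int) : {perm T} :=
  match k with
  | Posz n => (s ^+ n)%g
  | Negz n => ((s ^+ n.+1)^-1)%g
  end.

(* Composition as functions: (comp_perm s t) z = s (t z), i.e. "s t" in the
   paper's notation (in MathComp, t * s applies t first). *)
Definition comp_perm (T : finType) (s t : {perm T}) : {perm T} := (t * s)%g.

Lemma comp_permE (T : finType) (s t : {perm T}) z : comp_perm s t z = s (t z).
Proof. by rewrite /comp_perm permM. Qed.

From mathcomp Require Import all_boot all_fingroup all_algebra.
From mathcomp Require Import zify.
Set Implicit Arguments. Unset Strict Implicit. Unset Printing Implicit Defensive.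

(* Let D(u) be the residue of u - pi(u) mod m and tau_j := sigma c^j.  For every
   j = D(u) mod m, tau_j maps the fiber over pi(u) to itself, and for one of the
   two such j mod 2m it fixes that fiber pointwise; as m >= 3 there is another
   fiber, so tau_j has at least three cycles.  If D(u1) = D(u2) with u1 <> u2,
   the same j also keeps the fiber over pi(u2), and a third fiber gives a fourth
   cycle.  Otherwise D is a bijection.  Then summing pi(u) + D(u) = u + m [u < pi(u)]
   over u shows that m(m-1)/2 is a multiple of m, so m is odd, and the sum of
   these m exponents has the parity of sign(sigma).  But c is odd and
   #(Z_m x Z_2) is even, so cyc(tau_j) = j + sign(sigma) mod 2: if all these
   tau_j had exactly three cycles, every exponent, hence their sum, would have
   the opposite parity. *)

Lemma odd_sum (I : Type) (r : seq I) (P : pred I) (F : I -> nat) :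
  odd (\sum_(i <- r | P i) F i) = \big[addb/false]_(i <- r | P i) odd (F i).
Proof. exact: (big_morph odd oddD). Qed.

Lemma odd_permX (T : finType) (s : {perm T}) n :
  odd_perm (s ^+ n)%g = odd n && odd_perm s.
Proof.
elim: n => [|n IHn]; first by rewrite expg0 odd_perm1.
by rewrite expgS odd_permM IHn /=; case: (odd n); case: (odd_perm s).
Qed.

Lemma odd_cyc (T : finType) (s : {perm T}) :
  ~~ odd #|T| -> odd (cyc s) = odd_perm s.
Proof. by rewrite /odd_perm => /negbTE->. Qed.

Lemma odd_perm_morph (A B : finType) (phi : {perm A} -> {perm B}) (k : bool) :
  {morph phi : s t / (s * t)%g} ->
  (forall x y, x != y -> odd_perm (phi (tperm x y)) = k) ->
  forall s, odd_perm (phi s) = k && odd_perm s.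
Proof.
move=> phiM phiT s; have [ts -> dts] := prod_tpermP s; rewrite odd_perm_prod //.
elim: ts dts => [_ | t ts IHts /andP[dt dts]].
  rewrite big_nil andbF.
  by have := odd_permM (phi 1%g) (phi 1%g); rewrite -phiM mulg1 addbb.
by rewrite big_cons phiM odd_permM phiT // IHts //=; case: (k).
Qed.

Lemma prod_perm_fibersE (T I : finType) (key : T -> I) (F : I -> {perm T})
    (r : seq I) z :
  (forall i z, key (F i z) = key z) -> (forall i z, key z != i -> F i z = z) ->
  uniq r -> (\prod_(i <- r) F i)%g z = if key z \in r then F (key z) z else z.
Proof.
move=> keyF suppF; elim: r z => [|i r IHr] z /=; first by rewrite big_nil perm1.
case/andP=> ir ur; rewrite big_cons permM in_cons IHr //.
have [zi | ne] := eqVneq (key z) i; last by rewrite suppF.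
by rewrite keyF zi (negbTE ir).
Qed.

Section ProductPerms.
Variables A B : finType.
Notation T := (A * B)%type.

Lemma perm_fiber_subproof (a : A) (g : {perm B}) :
  injective (fun z : T => if z.1 == a then (z.1, g z.2) else z).
Proof.
move=> [x1 y1] [x2 y2] /=.
case: eqP => [-> | ne1]; case: eqP => [-> | ne2] //=.
- by case=> /perm_inj->.
- by case=> /esym/ne2.
- by case=> /ne1.
Qed.

Definition perm_fiber a g : {perm T} := perm (@perm_fiber_subproof a g).

Lemma perm_fiberE a g z : perm_fiber a g z = if z.1 == a then (z.1, g z.2) else z.
Proof. by rewrite permE. Qed.

Lemma perm_fst_subproof (pi : {perm A}) : injective (fun z : T => (pi z.1, z.2)).
Proof. by move=> [x1 y1] [x2 y2] [/perm_inj-> ->]. Qed.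

Definition perm_fst pi : {perm T} := perm (@perm_fst_subproof pi).

Lemma perm_fstE pi z : perm_fst pi z = (pi z.1, z.2).
Proof. by rewrite permE. Qed.

Lemma odd_perm_fiber a g : odd_perm (perm_fiber a g) = odd_perm g.
Proof.
rewrite (@odd_perm_morph _ _ (perm_fiber a) true) // => [s t | x y xy].
  apply/permP => -[x y]; rewrite permM !perm_fiberE permM /=.
  by case: eqP => [-> | /eqP/negbTE ->]; rewrite ?eqxx.
have -> : perm_fiber a (tperm x y) = tperm (a, x) (a, y).
  apply/permP => -[b w]; rewrite perm_fiberE /=.
  have [-> | ba] := eqVneq b a; last by rewrite tpermD // xpair_eqE eq_sym (negbTE ba).
  case: tpermP => [-> | -> | /eqP wx /eqP wy]; rewrite ?tpermL ?tpermR //.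
  by rewrite tpermD // xpair_eqE eqxx /= eq_sym.
by rewrite odd_tperm xpair_eqE eqxx.
Qed.

Lemma odd_perm_fst pi : odd_perm (perm_fst pi) = odd #|B| && odd_perm pi.
Proof.
apply: odd_perm_morph => [s t | x y xy].
  by apply/permP => z; rewrite permM !perm_fstE permM.
pose ts := [seq ((x, b), (y, b)) | b <- enum B].
have -> : perm_fst (tperm x y) = (\prod_(t <- ts) tperm t.1 t.2)%g.
  apply/permP => -[a b]; rewrite big_map (prod_perm_fibersE (key := snd)) ?enum_uniq //.
  - rewrite mem_enum perm_fstE /=.
    case: tpermP => [-> | -> | ax ay]; rewrite ?tpermL ?tpermR //.
    by rewrite tpermD // xpair_eqE negb_and eqxx orbF;
      apply/eqP => e; [apply: ax | apply: ay].
  - by move=> i z; case: tpermP => [-> | -> | //].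
  - move=> i [c d] /= di.
    by rewrite tpermD // xpair_eqE negb_and [i == d]eq_sym di orbT.
rewrite odd_perm_prod; first by rewrite size_map -cardE.
by apply/allP => _ /mapP[b _ ->]; rewrite /dpair /= xpair_eqE negb_and xy.
Qed.

Lemma odd_perm_fibered (pi : {perm A}) (f : A -> {perm B}) (s : {perm T}) :
  (forall x y, s (x, y) = (pi x, f x y)) ->
  odd_perm s = (odd #|B| && odd_perm pi) (+) \big[addb/false]_a odd_perm (f a).
Proof.
move=> sE.
have -> : s = ((\prod_(a <- index_enum A) perm_fiber a (f a)) * perm_fst pi)%g.
  apply/permP => -[x y].
  rewrite permM (prod_perm_fibersE (key := fst)) ?index_enum_uniq //.
  - by rewrite mem_index_enum perm_fiberE eqxx perm_fstE sE.
  - by move=> a z; rewrite perm_fiberE; case: ifP.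
  - by move=> a z /negbTE za; rewrite perm_fiberE za.
rewrite odd_permM odd_perm_fst addbC (big_morph _ (@odd_permM _) (odd_perm1 _)).
by under eq_bigr do rewrite odd_perm_fiber.
Qed.

End ProductPerms.

Section Counting.
Variables (T : finType) (s : {perm T}).

Lemma porbit_sub_invariant (S : {set T}) z :
  (forall w, w \in S -> s w \in S) -> z \in S -> porbit s z \subset S.
Proof.
move=> sS zS; apply/subsetP => _ /porbitP[i ->]; rewrite permX.
by elim: i => //= i; apply: sS.
Qed.

Lemma porbit_separated (S : {set T}) z w :
  (forall v, v \in S -> s v \in S) -> z \in S -> w \notin S ->
  porbit s z != porbit s w.
Proof.
move=> sS zS wS; apply: contraNneq wS => ezw.
by apply: (subsetP (porbit_sub_invariant sS zS)); rewrite ezw porbit_id.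
Qed.

Lemma porbit_fixed_separated z w : s z = z -> w != z -> porbit s z != porbit s w.
Proof.
move=> sz wz; apply: (@porbit_separated [set z]); rewrite ?inE ?set11 //.
by move=> v /set1P->; rewrite sz set11.
Qed.

Lemma size_le_cyc (zs : seq T) :
  uniq [seq porbit s z | z <- zs] -> size zs <= cyc s.
Proof.
move=> uzs; rewrite -(size_map (porbit s)) -(card_uniqP uzs).
by apply/subset_leq_card/subsetP => _ /mapP[z _ ->]; apply: imset_f.
Qed.

End Counting.

Lemma exists_third (A : finType) (x y : A) :
  2 < #|A| -> exists z, (z != x) && (z != y).
Proof.
move=> A_gt2; have [z | none] := pickP (fun z => (z != x) && (z != y)); first by exists z.
have sub : [set: A] \subset [set x; y].
  apply/subsetP => z _; move: (none z).
  by rewrite !inE => /negbT; rewrite negb_and !negbK.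
have := subset_leq_card sub; rewrite cardsT cards2.
by case: (x != y); rewrite leqNgt ?A_gt2 // (ltnW A_gt2).
Qed.

Section FiberCycles.
Variables (A : finType) (s : {perm A * 'I_2}).

Lemma cyc_ge3 x1 x3 : (forall y, s (x1, y) = (x1, y)) -> x3 != x1 -> 3 <= cyc s.
Proof.
move=> fix1 x31; apply: (@size_le_cyc _ _ [:: (x1, ord0); (x1, ord_max); (x3, ord0)]).
rewrite /= !inE !negb_or !andbT.
by rewrite !porbit_fixed_separated ?fix1 // xpair_eqE ?eqxx ?(negbTE x31).
Qed.

Lemma cyc_ge4 x1 x2 x3 :
  (forall y, s (x1, y) = (x1, y)) -> (forall y, (s (x2, y)).1 = x2) ->
  x2 != x1 -> x3 != x1 -> x3 != x2 -> 4 <= cyc s.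
Proof.
move=> fix1 keep2 x21 x31 x32.
apply: (@size_le_cyc _ _ [:: (x1, ord0); (x1, ord_max); (x2, ord0); (x3, ord0)]).
rewrite /= !inE !negb_or !andbT.
have keep2S : forall z, z \in [set z | z.1 == x2] -> s z \in [set z | z.1 == x2].
  by move=> [x y]; rewrite !inE => /eqP /= ->; rewrite keep2.
rewrite (@porbit_separated _ _ _ (x2, ord0) (x3, ord0) keep2S) ?inE ?eqxx //=.
by rewrite !porbit_fixed_separated ?fix1 // xpair_eqE ?eqxx ?(negbTE x21) ?(negbTE x31).
Qed.

End FiberCycles.

Lemma perm_I2E (g : {perm 'I_2}) (y : 'I_2) : val (g y) = (y + odd_perm g) %% 2.
Proof.
have I2 (z : 'I_2) : z = ord0 \/ z = ord_max.
  by case: z => -[|[|//]] ?; [left | right]; apply: val_inj.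
have [g0 | g0] := I2 (g ord0).
- have g1 : g ord_max = ord_max.
    by have [e|//] := I2 (g ord_max); have := perm_inj (etrans e (esym g0)).
  have -> : g = 1%g by apply/permP => z; have [->|->] := I2 z; rewrite perm1.
  by rewrite odd_perm1 perm1 addn0 modn_small.
- have g1 : g ord_max = ord0.
    by have [//|e] := I2 (g ord_max); have := perm_inj (etrans e (esym g0)).
  have -> : g = tperm ord0 ord_max.
    by apply/permP => z; have [->|->] := I2 z; rewrite ?tpermL ?tpermR.
  by rewrite odd_tperm; have [->|->] := I2 y; rewrite ?tpermL ?tpermR.
Qed.

Lemma dvdn_succ_mod m n : 0 < m -> (m %| n.+1) = (n %% m == m.-1).
Proof.
move=> m_gt0; rewrite /dvdn -addn1 -modnDml addn1.
move: (n %% m) (ltn_pmod n m_gt0) => r lt_r_m.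
have [eq_m | ne_m] := eqVneq r.+1 m; first by rewrite eq_m modnn; apply/eqP/eqP; lia.
by rewrite modn_small; [apply/eqP/eqP | ]; lia.
Qed.

Section TwistedShift.
Variables (m : nat) (c : {perm 'I_m * 'I_2}).
Hypothesis m_gt0 : 0 < m.
Hypothesis cE : forall x y,
  c (x, y) = (ordS x, if nat_of_ord x == m.-1 then ordS y else y).

Lemma odd_perm_twist : odd_perm c.
Proof.
pose xmax : 'I_m := Ordinal (etrans (ltn_predL m) m_gt0).
pose f x : {perm 'I_2} := if x == xmax then tperm ord0 ord_max else 1%g.
rewrite (@odd_perm_fibered _ _ (perm (@ordS_inj m)) f) => [|x y]; last first.
  rewrite cE permE /f -val_eqE /=; case: (_ == _); rewrite ?perm1 //.
  by congr pair; apply/val_inj; case: y => -[|[|//]] ?; rewrite permE.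
rewrite card_ord andFb (bigD1 xmax) //= /f eqxx odd_tperm big1 // => x /negbTE->.
exact: odd_perm1.
Qed.

(* Reading (x, y) as the residue x + m y of Z_2m, c is the successor map. *)
Lemma twistX j x y :
  val ((c ^+ j)%g (x, y)).1 = (x + j) %% m /\
  val ((c ^+ j)%g (x, y)).2 = (y + (x + j) %/ m) %% 2.
Proof.
elim: j => [|j].
  by rewrite expg0 perm1 addn0 modn_small // divn_small // addn0 modn_small.
rewrite expgSr permM addnS; case: ((c ^+ j)%g (x, y)) => x' y' /= [ex ey].
rewrite cE /= ex -addn1 modnDml addn1; split => //.
rewrite divnS // dvdn_succ_mod //; case: eqP => _ /=; rewrite ey; last by rewrite add0n.
by rewrite -addn1 modnDml addn1 add1n addnS.
Qed.

End TwistedShift.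

Section Shift.
Variables (m : nat) (pi : {perm 'I_m}).

Lemma shift_subproof (u : 'I_m) :
  (if pi u <= u then u - pi u else u + m - pi u) < m.
Proof. by have := ltn_ord u; case: (leqP (pi u) u); lia. Qed.

Definition shift u : 'I_m := Ordinal (shift_subproof u).

Definition carry (u : 'I_m) : bool := u < pi u.

Lemma pi_add_shift u : pi u + shift u = u + m * carry u.
Proof.
rewrite /carry /=; have := ltn_ord (pi u).
by case: (leqP (pi u) u) => /= le_or_gt; lia.
Qed.

Lemma sum_shift_inj :
  injective shift -> \sum_(u < m) (u : nat) = m * \sum_(u < m) carry u.
Proof.
move=> shift_inj; apply/(@addnI (\sum_(u < m) (u : nat))).
have sum_pi : \sum_(u < m) (u : nat) = \sum_(u < m) (pi u : nat).
  exact: reindex_inj perm_inj.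
have sum_shift : \sum_(u < m) (u : nat) = \sum_(u < m) (shift u : nat).
  exact: reindex_inj shift_inj.
rewrite {1}sum_pi {1}sum_shift -big_split big_distrr -big_split /=.
by apply: eq_bigr => u _; rewrite pi_add_shift.
Qed.

(* [shift] injective makes [- pi] a complete mapping of Z_m, and cyclic groups
   of even order have none. *)
Lemma odd_shift_inj : 0 < m -> injective shift -> odd m.
Proof.
move=> m_gt0 /sum_shift_inj sum_eq.
have := mul_bin_diag m 1; rewrite bin1 -bin2_sum big_mkord sum_eq mulnCA.
move=> /eqP; rewrite eqn_pmul2l // => /eqP m1_eq.
by rewrite -(prednK m_gt0) m1_eq /= oddM.
Qed.

End Shift.

Section Composite.
Variables (m : nat) (pi : {perm 'I_m}) (pix : 'I_m -> {perm 'I_2}).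
Variables sigma c : {perm 'I_m * 'I_2}.
Hypothesis m_gt0 : 0 < m.
Hypothesis sigmaE : forall x y, sigma (x, y) = (pi x, pix x y).
Hypothesis cE : forall x y,
  c (x, y) = (ordS x, if nat_of_ord x == m.-1 then ordS y else y).

Local Notation tau j := (comp_perm sigma (c ^+ j)%g).

Lemma odd_perm_sigma : odd_perm sigma = \big[addb/false]_u odd_perm (pix u).
Proof. by rewrite (odd_perm_fibered sigmaE) card_ord. Qed.

Lemma odd_cyc_tau j : odd (cyc (tau j)) = odd j (+) odd_perm sigma.
Proof.
rewrite odd_cyc ?card_prod ?card_ord ?oddM ?andbF //.
by rewrite /comp_perm odd_permM odd_permX (odd_perm_twist m_gt0 cE) andbT.
Qed.

Lemma tau_fiber u t y :
  (tau (shift pi u + m * t) (pi u, y)).1 = pi u /\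
  val (tau (shift pi u + m * t) (pi u, y)).2
    = (y + carry pi u + t + odd_perm (pix u)) %% 2.
Proof.
rewrite comp_permE; have := twistX m_gt0 cE (shift pi u + m * t) (pi u) y.
have -> : pi u + (shift pi u + m * t) = (carry pi u + t) * m + u.
  by rewrite addnA pi_add_shift; lia.
rewrite modnMDl divnMDl // modn_small // divn_small // addn0.
case: ((c ^+ _)%g _) => x' y' /= [/val_inj-> ey]; rewrite sigmaE perm_I2E ey modnDml.
by rewrite !addnA.
Qed.

Definition fixing_exp u : nat := shift pi u + m * (carry pi u (+) odd_perm (pix u)).

Lemma tau_fixing_exp u y : tau (fixing_exp u) (pi u, y) = (pi u, y).
Proof.
have [e1 e2] := tau_fiber u (carry pi u (+) odd_perm (pix u)) y.
rewrite [LHS]surjective_pairing e1; congr pair; apply/val_inj; rewrite e2.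
case: (carry pi u); case: (odd_perm (pix u));
  by rewrite /= ?addn0 -?addnA ?modnDr modn_small.
Qed.

Lemma sum_odd_fixing_exp :
  injective (shift pi) -> odd (\sum_(u < m) fixing_exp u) = odd_perm sigma.
Proof.
move=> shift_inj; have m_odd := odd_shift_inj m_gt0 shift_inj.
have sum_shift : \sum_(u < m) (shift pi u : nat) = \sum_(u < m) (u : nat).
  by rewrite [RHS](reindex_inj shift_inj).
rewrite big_split -big_distrr /= oddD oddM m_odd sum_shift (sum_shift_inj shift_inj).
rewrite oddM m_odd /=.
rewrite !odd_sum !(eq_bigr _ (fun u _ => oddb _)) big_split odd_perm_sigma /=.
by rewrite addbA addbb.
Qed.

Lemma cyc_tau_ge4_of_shift_collision u1 u2 :
  2 < m -> u1 != u2 -> shift pi u1 = shift pi u2 -> 4 <= cyc (tau (fixing_exp u1)).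
Proof.
rewrite -[in 2 < _](card_ord m) => I_gt2 u12 shift12.
have [x /andP[xu1 xu2]] := exists_third (pi u1) (pi u2) I_gt2.
apply: (cyc_ge4 (x2 := pi u2) (tau_fixing_exp u1) _ _ xu1 xu2).
  move=> y; rewrite /fixing_exp shift12.
  by case: (tau_fiber u2 (carry pi u1 (+) odd_perm (pix u1)) y).
by rewrite (inj_eq perm_inj) eq_sym.
Qed.

Lemma cyc_tau_ge4_of_shift_inj :
  2 < m -> injective (shift pi) -> exists u, 4 <= cyc (tau (fixing_exp u)).
Proof.
rewrite -[in 2 < _](card_ord m) => I_gt2 shift_inj.
apply/existsP; apply: contraT => /existsPn none.
have odd_exp u : odd (fixing_exp u) = ~~ odd_perm sigma.
  have [x /andP[xu _]] := exists_third (pi u) (pi u) I_gt2.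
  have cyc3 : cyc (tau (fixing_exp u)) = 3.
    apply/eqP; rewrite eqn_leq leqNgt (negbTE (none u)).
    exact: cyc_ge3 (tau_fixing_exp u) xu.
  have := odd_cyc_tau (fixing_exp u); rewrite cyc3 /=.
  by case: (odd _); case: (odd_perm _).
have := sum_odd_fixing_exp shift_inj.
rewrite odd_sum (eq_bigr _ (fun u _ => odd_exp u)) -[~~ _]oddb -odd_sum sum_nat_const.
by rewrite card_ord oddM (odd_shift_inj m_gt0 shift_inj) oddb; case: (odd_perm _).
Qed.

End Composite.

Theorem propositionB3 (m : nat) (hm : 3 <= m)
  (pi : {perm 'I_m}) (pix : 'I_m -> {perm 'I_2})
  (sigma c : {perm 'I_m * 'I_2})
  (hsigma : forall (x : 'I_m) (y : 'I_2), sigma (x, y) = (pi x, pix x y))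
  (hc : forall (x : 'I_m) (y : 'I_2),
          c (x, y) = (ordS x, if nat_of_ord x == m.-1 then ordS y else y)) :
  exists k : int, 4 <= cyc (comp_perm sigma (perm_zpow c k)).
Proof.
have m_gt0 : 0 < m by apply: leq_trans hm.
suff [u four] : exists u, 4 <= cyc (comp_perm sigma (c ^+ fixing_exp pi pix u)%g).
  by exists (Posz (fixing_exp pi pix u)).
have [/injectiveP shift_inj | /injectivePn[u1 [u2 u12 shift12]]] :=
  boolP (injectiveb (shift pi)).
  exact: (cyc_tau_ge4_of_shift_inj m_gt0 hsigma hc hm shift_inj).
by exists u1; exact: (cyc_tau_ge4_of_shift_collision m_gt0 hsigma hc hm u12 shift12).
Qed.
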